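(* For the algorithm PSRL-ZSG described in the context, the number of episodes up to time $T$, $K_T=\max\{k:t_k\le T\}$, satisfies $$K_T\le\sqrt{2SAT\log T},$$ where $S=|\mathcal{S}|$ and $A=|\mathcal{A}|$.
   Context: A two-player zero-sum stochastic game with finite state space $\mathcal{S}$ and finite joint action space $\mathcal{A}=\mathcal{A}^1\times\mathcal{A}^2$ is played over times $t=1,2,\dots$: at each time the state $s_t$ is observed and a joint action $a_t=(a_t^1,a_t^2)$ is taken (the agent chooses $a_t^1$, an arbitrary opponent chooses $a_t^2$). Let $N_t(s,a)=\sum_{\tau=1}^{t-1}\mathbb{1}(s_\tau=s,a_\tau=a)$. PSRL-ZSG divides time into episodes $k=1,2,\dots$ with start times $t_1=1<t_2<\cdots$ and lengths $T_k=t_{k+1}-t_k$, with $T_0=1$. At the start of each episode the agent samples a transition kernel $\theta_k$ from its posterior and plays the maximin stationary policy for $\theta_k$ throughout the episode. Episode $k$ continues at time $t$ as long as $t\le t_k+T_{k-1}$ and $N_t(s,a)\le 2N_{t_k}(s,a)$ for all $(s,a)\in\mathcal{S}\times\mathcal{A}$; as soon as either condition fails, a new episode starts. *)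

From mathcomp Require Import all_boot.
Set Implicit Arguments. Unset Strict Implicit. Unset Printing Implicit Defensive.

Section PSRL.
Variables (S A : finType).

(* A trajectory: s t = state at time t, a t = joint action at time t (t >= 1;
   the value at index 0 is irrelevant). *)

Definition visit_count (s : nat -> S) (a : nat -> A) (t : nat) (x : S * A) : nat :=
  \sum_(1 <= tau < t) ((s tau, a tau) == x).

Definition episode_continues (s : nat -> S) (a : nat -> A)
    (tk Tprev t : nat) : bool :=
  (t <= tk + Tprev) &&
  [forall x : S * A, visit_count s a t x <= 2 * visit_count s a tk x].

(* Length T_{k-1} of the episode preceding episode k (k >= 1), with T_0 = 1. *)
Definition prev_length (st : nat -> nat) (k : nat) : nat :=
  if k == 1 then 1 else st k - st k.-1.

Definition psrl_schedule (s : nat -> S) (a : nat -> A) (st : nat -> nat) : Prop :=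
  st 1 = 1 /\
  forall k, 1 <= k ->
    [/\ st k < st k.+1,
        (forall t, st k < t < st k.+1 ->
           episode_continues s a (st k) (prev_length st k) t) &
        ~~ episode_continues s a (st k) (prev_length st k) (st k.+1)].

End PSRL.

From Stdlib Require Import Reals Lra Psatz.
From mathcomp Require Import all_boot zify.

(* Fix a threshold c = 2^p and let T_k be the length of episode k.  Each of
   the first K - 1 episodes satisfies c <= T_k + (c - T_k), and their lengths
   add up to t_K - 1 < T.  While episodes end by the length criterion their
   lengths grow by at least one, so over such a run the slacks c - T_k add up
   to at most (c - l) + (c - l - 1) + ... + 1, where l is the length of the
   run's first episode.  An episode that does not grow was ended by the
   doubling criterion for some pair x, and the episode in which x doubles for
   the h-th time has length at least 2^h.  Hence 2^(p+1) K <= 2T + S A p 4^p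
   for every p.  Choosing p with 4^p of order T / (S A p) and bounding x ln x
   below by its tangent at 4^p yields K^2 <= 2 S A T ln T; when T <= 2 S A the
   trivial bound K <= T suffices. *)

Set Implicit Arguments. Unset Strict Implicit. Unset Printing Implicit Defensive.

Lemma dyadic_slack_sum p D : \sum_(h < D) (2 ^ p - 2 ^ h) + 2 ^ p <= p * 2 ^ p + 1.
Proof.
have tail : \sum_(h < D) (2 ^ p - 2 ^ h) <= \sum_(h < p) (2 ^ p - 2 ^ h).
  rewrite -!(big_mkord xpredT (fun h => 2 ^ p - 2 ^ h)).
  have [leDp|ltpD] := leqP D p.
    by rewrite [X in _ <= X](big_cat_nat (leq0n D) leDp) leq_addr.
  rewrite [X in X <= _](big_cat_nat (leq0n p) (ltnW ltpD)) /=.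
  rewrite [X in _ + X](_ : _ = 0) ?addn0 // big_nat_cond big1 // => h.
  by rewrite andbT => /andP[le_ph _]; apply/eqP; rewrite subn_eq0 leq_exp2l.
have geo : \sum_(h < p) 2 ^ h + 1 = 2 ^ p.
  elim: p {D tail} => [|p IH]; first by rewrite big_ord0.
  by rewrite big_ord_recr /= addnAC IH expnS mul2n addnn.
have split : \sum_(h < p) (2 ^ p - 2 ^ h) + \sum_(h < p) 2 ^ h = p * 2 ^ p.
  rewrite -big_split /=.
  under eq_bigr => h _ do rewrite subnK ?leq_pexp2l ?(ltnW (ltn_ord h)) //.
  by rewrite sum_nat_const card_ord.
lia.
Qed.

Section Schedule.
Variables (S A : finType) (s : nat -> S) (a : nat -> A) (st : nat -> nat).
Hypothesis sched : psrl_schedule s a st.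

Local Notation N := (visit_count s a).

Lemma visit_countD t1 t2 x : 1 <= t1 <= t2 ->
  N t2 x = N t1 x + \sum_(t1 <= tau < t2) ((s tau, a tau) == x).
Proof. by move=> /andP[t1_gt0 le_t12]; rewrite /visit_count (@big_cat_nat _ _ _ t1). Qed.

Lemma visit_count_mono t1 t2 x : 1 <= t1 <= t2 -> N t1 x <= N t2 x.
Proof. by move=> t12; rewrite (visit_countD x t12) leq_addr. Qed.

Lemma visit_count_leD t1 t2 x : 1 <= t1 <= t2 -> N t2 x <= N t1 x + (t2 - t1).
Proof.
move=> t12; rewrite (visit_countD x t12) leq_add2l -[t2 - t1]muln1 -sum_nat_const_nat.
by apply: leq_sum => tau _; exact: leq_b1.
Qed.

Lemma start_lt k : 0 < k -> st k < st k.+1.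
Proof. by move=> k_gt0; case: (sched.2 k k_gt0). Qed.

Lemma start_ge k : 0 < k -> k <= st k.
Proof.
elim: k => [//|[|k] IH _]; first by rewrite sched.1.
exact: leq_ltn_trans (IH isT) (start_lt (ltn0Sn k)).
Qed.

(* The length T_k of episode k; [ep_len 0 = 1] is the convention T_0 = 1. *)
Definition ep_len k := prev_length st k.+1.

Lemma ep_lenE k : 0 < k -> ep_len k = st k.+1 - st k.
Proof. by case: k. Qed.

Lemma ep_len_gt0 k : 0 < ep_len k.
Proof. by case: k => [//|k]; rewrite ep_lenE // subn_gt0 start_lt. Qed.

Lemma sum_ep_len J : \sum_(1 <= k < J.+1) ep_len k = st J.+1 - 1.
Proof.
elim: J => [|J IH]; first by rewrite big_geq // sched.1.
rewrite big_nat_recr //= IH ep_lenE //.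
by have := start_lt (ltn0Sn J); have := start_ge (ltn0Sn J); lia.
Qed.

Definition doubled x k := 2 * N (st k) x < N (st k.+1) x.

Lemma episode_end k : 0 < k -> ep_len k.-1 < ep_len k \/ exists x, doubled x k.
Proof.
move=> k_gt0; case: (sched.2 k k_gt0) => _ _.
have -> : prev_length st k = ep_len k.-1 by case: k k_gt0.
rewrite /episode_continues negb_and -ltnNge negb_forall => /orP[long|/existsP[x]].
  by left; rewrite (ep_lenE k_gt0); lia.
by rewrite -ltnNge => dbl; right; exists x.
Qed.

Definition reset_cost c k :=
  if ep_len k.-1 < ep_len k then 0 else 'C((c - ep_len k).+1, 2).

(* The extra term 'C(c - T_J, 2) = (c - T_J - 1) + ... + 1 bounds the slacks
   the current run can still accumulate if it keeps growing. *)
Lemma slack_potential c J :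
  \sum_(1 <= k < J.+1) (c - ep_len k) + 'C(c - ep_len J, 2)
    <= 'C(c - 1, 2) + \sum_(1 <= k < J.+1) reset_cost c k.
Proof.
elim: J => [|J IH]; first by rewrite !big_geq // addn0.
have step : 'C((c - ep_len J.+1).+1, 2) <= 'C(c - ep_len J, 2) + reset_cost c J.+1.
  rewrite /reset_cost /=; case: ifP => [grow|_]; last exact: leq_addl.
  rewrite addn0; have [le_c|lt_c] := leqP c (ep_len J.+1).
    by move: le_c; rewrite -subn_eq0 => /eqP->.
  by apply: leq_bin2l; lia.
rewrite binS bin1 in step.
by rewrite !(big_nat_recr J.+1) //=; lia.
Qed.

Lemma reset_cost_le c k : 0 < k ->
  2 * reset_cost c k <= c * \sum_x doubled x k * (c - ep_len k).
Proof.
move=> k_gt0; rewrite /reset_cost; case: ifP => [//|no_growth].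
have [|[x dbl]] := episode_end k_gt0; first by rewrite no_growth.
rewrite -mul_bin_diag bin1 /= (bigD1 x) //= dbl mul1n mulnDr.
apply: leq_trans (leq_addr _ _) => /=.
by rewrite leq_mul2r; have := ep_len_gt0 k; lia.
Qed.

Definition doublings x J := \sum_(1 <= k < J.+1) doubled x k.

Lemma exp_doublings_le x J : 2 ^ doublings x J <= N (st J.+1) x + 1.
Proof.
elim: J => [|J IH]; first by rewrite /doublings big_geq // addn1.
have st_gt0 : 0 < st J.+1 by apply: leq_trans (start_ge _).
have grow : N (st J.+1) x <= N (st J.+2) x.
  by apply: visit_count_mono; rewrite st_gt0 ltnW ?start_lt.
rewrite /doublings big_nat_recr //= -/(doublings x J) expnD.
case dbl: (doubled x J.+1); last by rewrite muln1; apply: leq_trans IH _; rewrite leq_add2r.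
by move: dbl; rewrite /doubled /= expn1; lia.
Qed.

Lemma doubled_ep_len_ge x k : 0 < k -> doubled x k -> 2 ^ doublings x k.-1 <= ep_len k.
Proof.
case: k => [//|k] _ dbl.
have st_gt0 : 0 < st k.+1 by apply: leq_trans (start_ge _).
have incr : N (st k.+2) x <= N (st k.+1) x + ep_len k.+1.
  by rewrite ep_lenE //; apply: visit_count_leD; rewrite st_gt0 ltnW ?start_lt.
by have := exp_doublings_le x k; move: dbl; rewrite /doubled /=; lia.
Qed.

Lemma doubled_slack_le x c J :
  \sum_(1 <= k < J.+1) doubled x k * (c - ep_len k)
    <= \sum_(h < doublings x J) (c - 2 ^ h).
Proof.
elim: J => [|J IH]; first by rewrite big_geq.
rewrite /doublings !(big_nat_recr J.+1) //= -/(doublings x J).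
case dbl: (doubled x J.+1); last by rewrite mul0n !addn0.
rewrite /= addn1 big_ord_recr /= mul1n leq_add // leq_sub2l //.
exact: doubled_ep_len_ge dbl.
Qed.

Lemma sum_reset_cost_le p J :
  2 * \sum_(1 <= k < J.+1) reset_cost (2 ^ p) k + #|{: S * A}| * 4 ^ p
    <= #|{: S * A}| * (p * 4 ^ p + 2 ^ p).
Proof.
set c := 2 ^ p; set n := #|{: S * A}|.
have -> : 4 ^ p = c * c by rewrite -expnMn.
have via_pairs : 2 * \sum_(1 <= k < J.+1) reset_cost c k
    <= c * \sum_x \sum_(1 <= k < J.+1) doubled x k * (c - ep_len k).
  rewrite exchange_big big_distrr big_distrr /= big_nat_cond [X in _ <= X]big_nat_cond.
  by apply: leq_sum => k /andP[/andP[k_gt0 _] _]; exact: reset_cost_le.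
have per_pair : \sum_x \sum_(1 <= k < J.+1) doubled x k * (c - ep_len k) + n * c
    <= n * (p * c + 1).
  have : \sum_x (\sum_(1 <= k < J.+1) doubled x k * (c - ep_len k) + c)
      <= \sum_(x : S * A) (p * c + 1).
    apply: leq_sum => x _.
    exact: leq_trans (leq_add (doubled_slack_le x c J) (leqnn c)) (dyadic_slack_sum _ _).
  by rewrite big_split /= !sum_nat_const.
have := leq_mul (leqnn c) per_pair; nia.
Qed.

Lemma episodes_dyadic_bound p K T : 0 < K -> st K <= T ->
  2 ^ p.+1 * K <= 2 * T + #|{: S * A}| * p * 4 ^ p.
Proof.
case: K => [//|J] _ le_T.
have resets := sum_reset_cost_le p J.
rewrite expnS; set c := 2 ^ p in resets *; set n := #|{: S * A}| in resets *.
have four : 4 ^ p = c * c by rewrite -expnMn.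
rewrite four in resets *.
have c_gt0 : 0 < c by rewrite expn_gt0.
have n_gt0 : 0 < n by apply/card_gt0P; exists (s 0, a 0).
have lengths : J * c <= st J.+1 - 1 + \sum_(1 <= k < J.+1) (c - ep_len k).
  have : \sum_(1 <= k < J.+1) c <= \sum_(1 <= k < J.+1) (ep_len k + (c - ep_len k)).
    by apply: leq_sum => k _; lia.
  by rewrite sum_nat_const_nat big_split sum_ep_len subSS subn0.
have slack := slack_potential c J.
have first_run : 2 * ('C(c - 1, 2) + (c - 1)) = c * (c - 1).
  by case: (c) c_gt0 => // m _; rewrite subn1 /= -{2}(bin1 m) -binS -mul_bin_diag bin1.
have cc : c * (c - 1) + c = c * c by case: (c) c_gt0 => // m _; nia.
have ncc : n * (c * (c - 1)) + n * c = n * (c * c) by rewrite -mulnDr cc.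
have absorb : c * (c - 1) <= n * (c * (c - 1)) by rewrite leq_pmull.
by have := start_ge (ltn0Sn J); rewrite mulnS; lia.
Qed.

End Schedule.

Lemma dyadic_window n T : 0 < n -> 12 * n <= T ->
  exists p, [/\ 2 <= p, p.+1 * 4 ^ p * n <= 4 * T & T <= p.+2 * 4 ^ p * n].
Proof.
move=> n_gt0 le_12nT.
pose P q := q.+1 * 4 ^ q * n <= 4 * T.
have P2 : P 2 by rewrite /P; lia.
have ubP q : P q -> q <= 4 * T.
  rewrite /P => Pq; apply: leq_trans Pq; apply: leq_trans (leqnSn q) _.
  by rewrite -mulnA leq_pmulr // muln_gt0 expn_gt0.
case: (ex_maxnP (ex_intro P 2 P2) ubP) => p Pp maxp.
exists p; split=> //; first exact: maxp.
have : ~~ P p.+1 by apply/negP => /maxp; rewrite ltnn.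
by rewrite /P -ltnNge expnS; lia.
Qed.

Section RealBounds.
Local Open Scope R_scope.

Lemma INR_leq (m n : nat) : (m <= n)%nat -> INR m <= INR n.
Proof. by move/leP; apply: le_INR. Qed.

Lemma INR_expn (m p : nat) : INR (m ^ p)%nat = INR m ^ p.
Proof. by elim: p => [//|p IH]; rewrite expnS mult_INR IH. Qed.

Lemma INR_pow4 p : INR (4 ^ p)%nat = (2 ^ p) ^ 2.
Proof. by rewrite -[4%nat]/(2 * 2)%nat expnMn mult_INR INR_expn (INR_IZR_INZ 2) /=; ring. Qed.

Lemma dyadic_boundR (n T K p : nat) : (2 ^ p.+1 * K <= 2 * T + n * p * 4 ^ p)%nat ->
  INR K <= INR T / 2 ^ p + INR n * INR p * 2 ^ p / 2.
Proof.
move=> /INR_leq; rewrite expnS !(mult_INR, plus_INR) INR_pow4 INR_expn (INR_IZR_INZ 2) /=.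
have c_gt0 : 0 < 2 ^ p by apply: pow_lt; lra.
move=> le_K; apply: (Rmult_le_reg_l (2 * 2 ^ p)); first lra.
have -> : 2 * 2 ^ p * (INR T / 2 ^ p + INR n * INR p * 2 ^ p / 2)
         = 2 * INR T + INR n * INR p * (2 ^ p) ^ 2 by field; lra.
lra.
Qed.

Lemma xlnx_ge_tangent a x : 0 < a -> 0 < x -> x * (ln a + 1) - a <= x * ln x.
Proof.
move=> a_gt0 x_gt0; have := exp_ineq1_le (ln a - ln x).
rewrite /Rminus exp_plus exp_Ropp !exp_ln // => tangent.
have := Rmult_le_compat_l x _ _ (Rlt_le _ _ x_gt0) tangent.
have : x * (a * / x) = a by field; lra.
lra.
Qed.

Lemma ln2_ge : 2 / 3 <= ln 2.
Proof.
set y := exp (1 / 18).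
have y_gt0 : 0 < y by apply: exp_pos.
have y_le : y <= 18 / 17.
  have := exp_ineq1_le (- (1 / 18)); rewrite exp_Ropp -/y => le_inv.
  have := Rmult_le_compat_r y _ _ (Rlt_le _ _ y_gt0) le_inv.
  by rewrite Rinv_l; lra.
have y12_le : y ^ 12 <= 2.
  apply: Rle_trans (pow_incr _ _ 12 (conj (Rlt_le _ _ y_gt0) y_le)) _.
  by simpl; lra.
have ln_y : ln y = 1 / 18 by rewrite /y ln_exp.
have := xlnx_ge_tangent (pow_lt _ 12 y_gt0) (ltac:(lra) : 0 < 2).
by rewrite ln_pow // ln_y (INR_IZR_INZ 12) /=; lra.
Qed.

Lemma ln_sqr_pow2_ge p : 4 * INR p / 3 <= ln ((2 ^ p) ^ 2).
Proof.
rewrite !ln_pow; try apply: pow_lt; try lra.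
by have := ln2_ge; have := pos_INR p; rewrite (INR_IZR_INZ 2) /=; nra.
Qed.

Lemma normalized_dyadic_ineq (u p : R) : 2 <= p -> (p + 1) / 4 <= u -> u <= p + 2 ->
  (u + p / 2) ^ 2 <= 2 * u * (4 * p / 3 + 1) - 2.
Proof.
move=> p_ge2 lo hi.
have := Rmult_le_pos (u - (p + 1) / 4) (p + 2 - u) ltac:(lra) ltac:(lra).
nra.
Qed.

Lemma dyadic_ineq (n T p c : R) : 1 <= n -> 2 <= p -> 0 < c ->
  (p + 1) * c ^ 2 * n <= 4 * T -> T <= (p + 2) * c ^ 2 * n ->
  (T / c + n * p * c / 2) ^ 2 <= 2 * n * (T * (4 * p / 3 + 1) - c ^ 2).
Proof.
move=> n_ge1 p_ge2 c_gt0 lo hi.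
have ncc_gt0 : 0 < n * c ^ 2 by nra.
set u := T / (n * c ^ 2).
have Tu : T = u * (n * c ^ 2) by rewrite /u; field; lra.
rewrite Tu in lo hi *.
have := normalized_dyadic_ineq p_ge2 (ltac:(nra) : (p + 1) / 4 <= u) (ltac:(nra) : u <= p + 2).
move=> /(Rmult_le_compat_l (n * (n * c ^ 2)) _ _ ltac:(nra)) scaled.
have -> : u * (n * c ^ 2) / c + n * p * c / 2 = n * c * (u + p / 2) by field; lra.
nra.
Qed.

Lemma dyadic_ineq1 (n T : R) : 1 <= n -> 4 <= T -> 2 * n <= T -> T + 1 <= 12 * n ->
  (T / 2 + n) ^ 2 <= 2 * n * (T * (4 / 3 + 1) - 4).
Proof.
move=> n_ge1 T_ge4 lo hi.
have := Rmult_le_pos (T - 2 * n) (12 * n - 1 - T) ltac:(lra) ltac:(lra).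
have := Rmult_le_pos (T - 4) (12 * n - 1 - T) ltac:(lra) ltac:(lra).
nra.
Qed.

Lemma sqr_le_of_dyadic (n T K : R) (p : nat) : 0 <= n -> 0 < T -> 0 <= K ->
  K <= T / 2 ^ p + n * INR p * 2 ^ p / 2 ->
  (T / 2 ^ p + n * INR p * 2 ^ p / 2) ^ 2
    <= 2 * n * (T * (4 * INR p / 3 + 1) - (2 ^ p) ^ 2) ->
  K ^ 2 <= 2 * n * T * ln T.
Proof.
move=> n_ge0 T_gt0 K_ge0 le_K le_sqr.
have tangent := xlnx_ge_tangent (pow_lt _ 2 (pow_lt _ p Rlt_0_2)) T_gt0.
have := Rmult_le_compat_l T _ _ (Rlt_le _ _ T_gt0) (ln_sqr_pow2_ge p).
have := Rmult_le_compat_l (2 * n) _ _ ltac:(lra) tangent.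
have : K ^ 2 <= (T / 2 ^ p + n * INR p * 2 ^ p / 2) ^ 2 by apply: pow_incr; lra.
nra.
Qed.

Lemma sqr_le_of_le_2n (n T K : R) : 0 <= K <= T -> T <= 2 * n -> 1 <= ln T ->
  K ^ 2 <= 2 * n * T * ln T.
Proof.
move=> [K_ge0 le_KT] le_T2n lnT_ge1.
have := Rmult_le_compat _ _ _ _ K_ge0 K_ge0 le_KT le_KT.
have := Rmult_le_compat_l (2 * n * T) _ _ ltac:(nra) lnT_ge1.
nra.
Qed.

Lemma sqr_le_of_dyadic_bounds (n T K : nat) :
  (0 < n)%nat -> (3 <= T)%nat -> (K <= T)%nat ->
  (forall p, 2 ^ p.+1 * K <= 2 * T + n * p * 4 ^ p)%nat ->
  INR K ^ 2 <= 2 * INR n * INR T * ln (INR T).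
Proof.
move=> n_gt0 T_ge3 le_KT dyadic.
have n_ge1 : 1 <= INR n by apply: INR_leq n_gt0.
have T_ge3R : 3 <= INR T by have := INR_leq T_ge3; rewrite (INR_IZR_INZ 3).
have T_gt0 : 0 < INR T by lra.
have K_ge0 := pos_INR K.
have lnT_ge1 : 1 <= ln (INR T).
  have := xlnx_ge_tangent (exp_pos 1) T_gt0; rewrite ln_exp.
  by have := exp_le_3; nra.
have [le_T2n|lt_2nT] := leqP T (2 * n).
  apply: sqr_le_of_le_2n => //; first by split=> //; apply: INR_leq.
  by have := INR_leq le_T2n; rewrite mult_INR (INR_IZR_INZ 2).
have [lt_T12n|le_12nT] := ltnP T (12 * n).
  have [T_gt3|T_le3] := ltnP 3 T.
    apply: (sqr_le_of_dyadic (pos_INR n) T_gt0 K_ge0 (dyadic_boundR (dyadic 1%nat))).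
    have T_ge4 : 4 <= INR T by have := INR_leq T_gt3; rewrite (INR_IZR_INZ 4).
    have lo : 2 * INR n <= INR T.
      by have := INR_leq (ltnW lt_2nT); rewrite mult_INR (INR_IZR_INZ 2).
    have hi : INR T + 1 <= 12 * INR n.
      by have := INR_leq lt_T12n; rewrite S_INR mult_INR (INR_IZR_INZ 12).
    by have := dyadic_ineq1 n_ge1 T_ge4 lo hi; rewrite /=; lra.
  (* Here T = 3 and n = 1: the real bound K <= 5/2 would need ln 3 >= 25/24,
     but K is an integer. *)
  have n1 : n = 1%nat by lia.
  have K_le2 : (K <= 2)%nat by move: (dyadic 1%nat); rewrite n1 !expnS expn0; lia.
  have K_le2R : INR K <= 2 by have := INR_leq K_le2; rewrite (INR_IZR_INZ 2).
  have := Rmult_le_compat 3 (INR T) 1 (ln (INR T)) ltac:(lra) ltac:(lra) T_ge3R lnT_ge1.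
  by rewrite n1 INR_1; nra.
have [p [p_ge2 lo hi]] := dyadic_window n_gt0 le_12nT.
apply: (sqr_le_of_dyadic (pos_INR n) T_gt0 K_ge0 (dyadic_boundR (dyadic p))).
apply: dyadic_ineq => //; first by have := INR_leq p_ge2; rewrite (INR_IZR_INZ 2).
- by apply: pow_lt; lra.
- by have := INR_leq lo; rewrite !mult_INR INR_pow4 S_INR (INR_IZR_INZ 4).
- by have := INR_leq hi; rewrite !mult_INR INR_pow4 !S_INR; lra.
Qed.

End RealBounds.

Theorem lemma3 (S A1 A2 : finType) (s : nat -> S) (a : nat -> A1 * A2)
    (st : nat -> nat) (T : nat) :
  psrl_schedule s a st ->
  3 <= T ->
  forall k, 1 <= k -> st k <= T ->
  Rle (INR k)
      (sqrt (2 * INR #|S| * INR #|{: A1 * A2}| * INR T * ln (INR T))).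
Proof.
move=> sched T_ge3 k k_gt0 le_T.
have n_gt0 : 0 < #|{: S * (A1 * A2)}| by apply/card_gt0P; exists (s 0, a 0).
have le_kT : k <= T := leq_trans (start_ge sched k_gt0) le_T.
have := sqr_le_of_dyadic_bounds n_gt0 T_ge3 le_kT
  (fun p => episodes_dyadic_bound sched p k_gt0 le_T).
have card_SA : #|{: S * (A1 * A2)}| = #|S| * #|{: A1 * A2}| := card_prod _ _.
rewrite card_SA mult_INR => sqr_le.
by rewrite -(sqrt_pow2 _ (pos_INR k)); apply: sqrt_le_1_alt; lra.
Qed.
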